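(* For any American option $\xi$ and any mixed stopping time $\chi\in\mathcal{X}$, \[ \{-x\in\mathbb{R}^d:\exists y\in\Phi,\ (y,\chi)\in\Phi^{\mathrm{bg}}(\xi),\ x=y_0\}=\{-x\in\mathbb{R}^d:\exists z\in\Psi^{\mathrm{a}}(-\xi_\chi),\ x=z_0\}. \]
   Context: Finite filtered probability space $(\Omega,\mathcal{F},\mathbb{P};(\mathcal{F}_t)_{t=0}^T)$, $\mathcal{F}_0$ trivial, $\mathcal{F}_T=2^\Omega$, $\mathbb{P}(\{\omega\})>0$. $\mathcal{L}_t$: $\mathcal{F}_t$-measurable $\mathbb{R}^d$-valued random variables. $d$ assets, $\mathcal{F}_t$-measurable exchange rates $\pi^{jk}_t>0$, $\pi^{jj}_t=1$. Solvency cone $\mathcal{K}_t$: $x\in\mathcal{L}_t$ with $x(\omega)$ in the convex cone generated by $e^1,\ldots,e^d$ and $\pi^{jk}_t(\omega)e^j-e^k$ for all $\omega$. Trading strategies $\Phi$: $y=(y_t)_{t=0}^{T+1}$, $y_0\in\mathbb{R}^d$, $y_t\in\mathcal{L}_{t-1}$ ($t=1,\ldots,T$), $y_{T+1}=0$. Mixed stopping times $\mathcal{X}$: adapted $[0,1]$-valued $\chi$ with $\sum_{t=0}^T\chi_t=1$; $\xi_\chi=\sum_{t=0}^T\chi_t\xi_t\in\mathcal{L}_T$. American option: adapted $\mathbb{R}^d$-valued $\xi=(\xi_t)_{t=0}^T$. $\Phi^{\mathrm{bg}}(\xi)$: pairs $(y,\chi)\in\Phi\times\mathcal{X}$ with $y_t+\chi_t\xi_t-y_{t+1}\in\mathcal{K}_t$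 for each $t=0,\ldots,T$. For $\zeta\in\mathcal{L}_T$, $\Psi^{\mathrm{a}}(\zeta)$ is the set of $y\in\Phi$ with $y_t-y_{t+1}\in\mathcal{K}_t$ for $t=0,\ldots,T-1$ and $y_T-\zeta\in\mathcal{K}_T$. Standing assumption: no arbitrage (no $y\in\Phi$ with $y_0=0$, $y_t-y_{t+1}\in\mathcal{K}_t$ for $t<T$ and $y_T-x\in\mathcal{K}_T$ for a nonzero componentwise non-negative $x\in\mathcal{L}_T$). *)

From HB Require Import structures.
From mathcomp Require Import all_boot all_order all_algebra.
From mathcomp Require Export boolp classical_sets reals.
Set Implicit Arguments.
Unset Strict Implicit.
Unset Printing Implicit Defensive.
Import Order.TTheory GRing.Theory Num.Theory.
Local Open Scope ring_scope.

Section Market.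
Context {R : realType} {Omega : finType} {d : nat}.

Definition is_sigma_algebra (A : {set {set Omega}}) : Prop :=
  [/\ [set: Omega]%SET \in A,
      (forall B, B \in A -> ~: B \in A) &
      (forall B C, B \in A -> C \in A -> B :|: C \in A)].

(* Measurability of a map with values in an eqType (on a finite space this is
   the same as: every level set is an event). *)
Definition meas {X : eqType} (A : {set {set Omega}}) (f : Omega -> X) : Prop :=
  forall c : X, [set w | f w == c]%SET \in A.

Definition is_filtration (T : nat) (F : nat -> {set {set Omega}}) : Prop :=
  [/\ (forall t, (t <= T)%N -> is_sigma_algebra (F t)),
      (forall s t, (s <= t)%N -> (t <= T)%N -> F s \subset F t),
      F 0%N = [set finset.set0; [set: Omega]]%SET &
      F T = powerset [set: Omega]%SET].

Definition is_positive_prob (P : Omega -> R) : Prop :=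
  (forall w, 0 < P w) /\ \sum_w P w = 1.

Definition is_exchange_rates (T : nat) (F : nat -> {set {set Omega}})
  (pi : nat -> Omega -> 'I_d -> 'I_d -> R) : Prop :=
  forall t, (t <= T)%N ->
    [/\ forall w j k, 0 < pi t w j k,
        forall w j, pi t w j j = 1 &
        forall j k, meas (F t) (fun w => pi t w j k)].

Definition solv_cone (p : 'I_d -> 'I_d -> R) (x : 'rV[R]_d) : Prop :=
  exists (a : 'I_d -> R) (b : 'I_d -> 'I_d -> R),
    [/\ forall j, 0 <= a j,
        forall j k, 0 <= b j k &
        x = \sum_j a j *: delta_mx 0 j
            + \sum_j \sum_k b j k *: (p j k *: delta_mx 0 j - delta_mx 0 k)].

Definition inK (F : nat -> {set {set Omega}})
  (pi : nat -> Omega -> 'I_d -> 'I_d -> R) (t : nat) (x : Omega -> 'rV[R]_d) : Prop :=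
  meas (F t) x /\ forall w, solv_cone (pi t w) (x w).

Definition is_strategy (T : nat) (F : nat -> {set {set Omega}})
  (y : nat -> Omega -> 'rV[R]_d) : Prop :=
  [/\ exists c, forall w, y 0%N w = c,
      forall t, (1 <= t)%N -> (t <= T)%N -> meas (F t.-1) (y t) &
      forall w, y T.+1 w = 0].

Definition is_mixed_stopping (T : nat) (F : nat -> {set {set Omega}})
  (chi : nat -> Omega -> R) : Prop :=
  [/\ forall t, (t <= T)%N -> meas (F t) (chi t),
      forall t w, (t <= T)%N -> 0 <= chi t w <= 1 &
      forall w, \sum_(t < T.+1) chi t w = 1].

Definition is_american_option (T : nat) (F : nat -> {set {set Omega}})
  (xi : nat -> Omega -> 'rV[R]_d) : Prop :=
  forall t, (t <= T)%N -> meas (F t) (xi t).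

Definition stopped_payoff (T : nat) (chi : nat -> Omega -> R)
  (xi : nat -> Omega -> 'rV[R]_d) : Omega -> 'rV[R]_d :=
  fun w => \sum_(t < T.+1) chi t w *: xi t w.

Definition in_Phi_bg (T : nat) (F : nat -> {set {set Omega}})
  (pi : nat -> Omega -> 'I_d -> 'I_d -> R) (xi : nat -> Omega -> 'rV[R]_d)
  (y : nat -> Omega -> 'rV[R]_d) (chi : nat -> Omega -> R) : Prop :=
  [/\ is_strategy T F y, is_mixed_stopping T F chi &
      forall t, (t <= T)%N ->
        inK F pi t (fun w => y t w + chi t w *: xi t w - y t.+1 w)].

Definition in_Psi_a (T : nat) (F : nat -> {set {set Omega}})
  (pi : nat -> Omega -> 'I_d -> 'I_d -> R) (zeta : Omega -> 'rV[R]_d)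
  (y : nat -> Omega -> 'rV[R]_d) : Prop :=
  [/\ is_strategy T F y,
      forall t, (t < T)%N -> inK F pi t (fun w => y t w - y t.+1 w) &
      inK F pi T (fun w => y T w - zeta w)].

Definition no_arbitrage (T : nat) (F : nat -> {set {set Omega}})
  (pi : nat -> Omega -> 'I_d -> 'I_d -> R) : Prop :=
  ~ exists (y : nat -> Omega -> 'rV[R]_d) (x : Omega -> 'rV[R]_d),
      [/\ is_strategy T F y,
          forall w, y 0%N w = 0,
          forall t, (t < T)%N -> inK F pi t (fun w => y t w - y t.+1 w),
          meas (F T) x /\ (exists w, x w != 0) /\ (forall w i, 0 <= x w 0 i) &
          inK F pi T (fun w => y T w - x w)].

End Market.

From HB Require Import structures.
From mathcomp Require Import all_boot all_order all_algebra.
From mathcomp Require Import boolp classical_sets reals.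
Import GRing.Theory.
Local Open Scope ring_scope.
Local Open Scope classical_set_scope.

(* With the running payoff S_t = sum_(s < t) chi_s xi_s, the shifts
   y |-> y - S and z |-> z + S (both truncated to 0 after T) are mutually
   inverse bijections between the two families of strategies: the
   increments y_t + chi_t xi_t - y_(t+1) and z_t - z_(t+1) coincide, and the
   terminal condition y_(T+1) = 0 becomes z_T - (- xi_chi) in K_T because
   S_(T+1) = xi_chi. Measurability is preserved since S_t is
   F_(t-1)-measurable. *)

Section SigmaAlgebra.
Context {Omega : finType} (A : {set {set Omega}}).
Hypothesis sigmaA : is_sigma_algebra A.

Lemma sigma_set0 : finset.set0 \in A.
Proof. by case: sigmaA => TA compA _; rewrite -finset.setCT compA. Qed.

Lemma sigma_setI B C : B \in A -> C \in A -> (B :&: C)%SET \in A.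
Proof.
case: sigmaA => _ compA unionA BA CA.
by rewrite -[(B :&: C)%SET]finset.setCK finset.setCI compA // unionA // compA.
Qed.

Lemma sigma_bigcup (I : finType) (P : pred I) (B : I -> {set Omega}) :
  (forall i, P i -> B i \in A) -> (\bigcup_(i | P i) B i)%SET \in A.
Proof.
case: (sigmaA) => _ _ unionA BA.
by apply: (big_ind (fun X => X \in A)) => //; apply: sigma_set0.
Qed.

Lemma meas_map2 {X1 X2 Y : eqType} (f1 : Omega -> X1) (f2 : Omega -> X2)
    (h : X1 -> X2 -> Y) :
  meas A f1 -> meas A f2 -> meas A (fun w => h (f1 w) (f2 w)).
Proof.
move=> f1A f2A c.
have -> : [set w | h (f1 w) (f2 w) == c]%SET =
    (\bigcup_(w0 | h (f1 w0) (f2 w0) == c)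
       ([set w | f1 w == f1 w0] :&: [set w | f2 w == f2 w0]))%SET.
  apply/finset.setP => w; rewrite inE; apply/idP/bigcupP.
  - by move=> hw; exists w => //; rewrite !inE !eqxx.
  - by case=> w0 hw0; rewrite !inE => /andP[/eqP -> /eqP ->].
by apply: sigma_bigcup => w0 _; apply: sigma_setI.
Qed.

Lemma meas_map {X Y : eqType} (f : Omega -> X) (h : X -> Y) :
  meas A f -> meas A (fun w => h (f w)).
Proof. by move=> fA; apply: (meas_map2 f f (fun a _ => h a) fA fA). Qed.

Lemma meas_cst {X : eqType} (c0 : X) : meas A (fun _ => c0).
Proof.
move=> c; case: (c0 == c).
- have -> : [set _ : Omega | true]%SET = [set: Omega]%SET.
    by apply/finset.setP => w; rewrite !inE.
  by case: sigmaA.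
- have -> : [set _ : Omega | false]%SET = finset.set0.
    by apply/finset.setP => w; rewrite !inE.
  exact: sigma_set0.
Qed.

Lemma meas_sum {V : zmodType} n (g : nat -> Omega -> V) :
  (forall s, (s < n)%N -> meas A (g s)) -> meas A (fun w => \sum_(s < n) g s w).
Proof.
elim: n => [|n IHn] gA.
  by under eq_fun do rewrite big_ord0; apply: meas_cst.
under eq_fun do rewrite big_ord_recr.
apply: meas_map2; last exact: gA.
by apply: IHn => s /ltnW; apply: gA.
Qed.

End SigmaAlgebra.

Lemma meas_mono {Omega : finType} {X : eqType} {A B : {set {set Omega}}}
    {f : Omega -> X} :
  A \subset B -> meas A f -> meas B f.
Proof. by move=> /fintype.subsetP AB fA c; apply/AB/fA. Qed.

Section RunningPayoff.
Context {R : realType} {Omega : finType} {d : nat}.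
Variables (T : nat) (F : nat -> {set {set Omega}}).
Variables (pi : nat -> Omega -> 'I_d -> 'I_d -> R).
Variables (xi : nat -> Omega -> 'rV[R]_d) (chi : nat -> Omega -> R).
Hypothesis hF : is_filtration T F.

Definition running_payoff (t : nat) (w : Omega) : 'rV[R]_d :=
  \sum_(s < t) chi s w *: xi s w.

Lemma running_payoff0 w : running_payoff 0 w = 0.
Proof. exact: big_ord0. Qed.

Lemma running_payoffS t w :
  running_payoff t.+1 w = running_payoff t w + chi t w *: xi t w.
Proof. exact: big_ord_recr. Qed.

Lemma stopped_payoffE w : stopped_payoff T chi xi w = running_payoff T.+1 w.
Proof. by []. Qed.

Lemma filtration_prev_sigma t : (t <= T)%N -> is_sigma_algebra (F t.-1).
Proof.
by case: hF => sigmaF _ _ _ tT; apply/sigmaF/(leq_trans (leq_pred t)).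
Qed.

Hypotheses (xiA : is_american_option T F xi) (chiA : is_mixed_stopping T F chi).

Lemma running_payoff_meas t :
  (1 <= t)%N -> (t <= T)%N -> meas (F t.-1) (running_payoff t).
Proof.
case: hF chiA => sigmaF monoF _ _ [chi_meas _ _] t1 tT.
apply: (meas_sum (F t.-1) (filtration_prev_sigma t tT) t
          (fun s w => chi s w *: xi s w)) => s st.
have sT : (s <= T)%N by apply: ltnW (leq_trans st tT).
apply: (meas_mono (monoF s t.-1 _ _)).
- by rewrite -ltnS prednK.
- exact: leq_trans (leq_pred t) tT.
by apply: meas_map2; [apply: sigmaF | apply: chi_meas | apply: xiA].
Qed.

Definition shift_strategy (y c : nat -> Omega -> 'rV[R]_d)
    (t : nat) (w : Omega) : 'rV[R]_d :=
  if (t <= T)%N then y t w + c t w else 0.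

Lemma shift_strategy_is_strategy y c :
  is_strategy T F y -> (forall w, c 0%N w = 0) ->
  (forall t, (1 <= t)%N -> (t <= T)%N -> meas (F t.-1) (c t)) ->
  is_strategy T F (shift_strategy y c).
Proof.
move=> [[y0 y0E] yA _] c0 cA; split.
- by exists y0 => w; rewrite /shift_strategy leq0n c0 addr0.
- move=> t t1 tT; rewrite /shift_strategy tT.
  by apply: meas_map2; [apply: filtration_prev_sigma | apply: yA | apply: cA].
- by move=> w; rewrite /shift_strategy ltnn.
Qed.

Lemma inK_eq t (f g : Omega -> 'rV[R]_d) :
  (forall w, f w = g w) -> inK F pi t f -> inK F pi t g.
Proof. by move=> /funext ->. Qed.

Lemma Phi_bg_shift_Psi_a y :
  in_Phi_bg T F pi xi y chi ->
  in_Psi_a T F pi (fun w => - stopped_payoff T chi xi w)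
    (shift_strategy y (fun t w => - running_payoff t w)).
Proof.
move=> [ys _ yK]; have [_ _ yT] := ys; split.
- apply: shift_strategy_is_strategy => // [w|t t1 tT].
    by rewrite running_payoff0 oppr0.
  by apply: meas_map;
    [apply: filtration_prev_sigma | apply: running_payoff_meas].
- move=> t tT; apply: inK_eq (yK t (ltnW tT)) => w.
  rewrite /shift_strategy ltnW // tT running_payoffS.
  by rewrite opprD opprK addrACA addKr addrAC.
- apply: inK_eq (yK T (leqnn T)) => w.
  rewrite /shift_strategy leqnn yT stopped_payoffE running_payoffS.
  by rewrite opprK subr0 subrKA.
Qed.

Lemma Psi_a_shift_Phi_bg z :
  in_Psi_a T F pi (fun w => - stopped_payoff T chi xi w) z ->
  in_Phi_bg T F pi xi (shift_strategy z running_payoff) chi.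
Proof.
move=> [zs zK zKT]; split => //.
- apply: shift_strategy_is_strategy => //; first exact: running_payoff0.
  exact: running_payoff_meas.
- move=> t; rewrite leq_eqVlt => /orP[/eqP -> | tT].
    apply: inK_eq zKT => w.
    by rewrite /shift_strategy leqnn ltnn subr0 stopped_payoffE running_payoffS
      opprK addrA.
  apply: inK_eq (zK t tT) => w.
  rewrite /shift_strategy ltnW // tT running_payoffS.
  by rewrite -(addrA (z t w)) (addrC (z t.+1 w)) addrKA.
Qed.

End RunningPayoff.

Theorem proposition5p5 (R : realType) (Omega : finType) (d T : nat)
  (F : nat -> {set {set Omega}}) (P : Omega -> R)
  (pi : nat -> Omega -> 'I_d -> 'I_d -> R)
  (hF : is_filtration T F) (hP : is_positive_prob P)
  (hpi : is_exchange_rates T F pi) (hNA : no_arbitrage T F pi)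
  (xi : nat -> Omega -> 'rV[R]_d) (hxi : is_american_option T F xi)
  (chi : nat -> Omega -> R) (hchi : is_mixed_stopping T F chi) :
  [set v : 'rV[R]_d | exists x : 'rV[R]_d, v = - x /\
     exists y, in_Phi_bg T F pi xi y chi /\ forall w, y 0%N w = x]
  =
  [set v : 'rV[R]_d | exists x : 'rV[R]_d, v = - x /\
     exists z, in_Psi_a T F pi (fun w => - stopped_payoff T chi xi w) z
               /\ forall w, z 0%N w = x].
Proof.
apply/seteqP; split => _ [x [-> [y [y_in y0]]]]; exists x; split => //.
- exists (shift_strategy T y (fun t w => - running_payoff xi chi t w)).
  split; first exact: Phi_bg_shift_Psi_a.
  by move=> w; rewrite /shift_strategy leq0n running_payoff0 oppr0 addr0.
- exists (shift_strategy T y (running_payoff xi chi)).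
  split; first exact: Psi_a_shift_Phi_bg.
  by move=> w; rewrite /shift_strategy leq0n running_payoff0 addr0.
Qed.
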